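(* Let $n\ge 1$ and let $\xi=(\xi^1,\ldots,\xi^n)\in\mathbb{Z}^n\setminus\{0\}$. Let $k$ be the number of non-zero coordinates of $\xi$; write $\xi^{i_1},\ldots,\xi^{i_k}\neq 0$ with $i_1<\cdots<i_k$, and $\xi^{j_1}=\cdots=\xi^{j_{n-k}}=0$ with $j_1<\cdots<j_{n-k}$. Fix $\bar s\in\{1,\ldots,k\}$ and define vectors $\xi_1,\ldots,\xi_n\in\mathbb{Z}^n$ as follows: - $\xi_1=\xi$; - for $p=2,\ldots,k-\bar s+1$: $\xi_p^{i_{\bar s-1+p}}=-\xi^{i_{\bar s-1+p}}$ and $\xi_p^i=\xi^i$ for all other indices $i$; - for $p=k-\bar s+2,\ldots,k$: $\xi_p^{i_{\bar s-1+p-k}}=-\xi^{i_{\bar s-1+p-k}}$ and $\xi_p^i=\xi^i$ for all other indices $i$; - for $p=k+1,\ldots,n$: $\xi_p^{i_{\bar s}}=0$, $\xi_p^{j_{p-k}}=\xi^{i_{\bar s}}$, and $\xi_p^i=\xi^i$ for all other indices $i$. Then the vectors $\xi_1,\ldots,\xi_n$ are linearly independent.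
   Context: Here $\xi_p^i$ denotes the $i$-th coordinate of the vector $\xi_p$. *)

(* Vectors of Z^n are functions 'I_n -> int (coordinates 0..n-1);
   paper indices (1-based) are handled by the nat arithmetic below. *)
From mathcomp Require Import all_boot all_order all_algebra.
Set Implicit Arguments. Unset Strict Implicit. Unset Printing Implicit Defensive.
Import Order.TTheory GRing.Theory Num.Theory.
Local Open Scope ring_scope.

Definition nzidx n (xi : 'I_n -> int) : seq 'I_n := [seq i <- enum 'I_n | xi i != 0].
Definition zidx n (xi : 'I_n -> int) : seq 'I_n := [seq i <- enum 'I_n | xi i == 0].

Definition nzcount n (xi : 'I_n -> int) : nat := size (nzidx xi).

Definition iidx n (xi : 'I_n -> int) (a : nat) : nat := nth 0%N (map val (nzidx xi)) a.-1.
Definition jidx n (xi : 'I_n -> int) (a : nat) : nat := nth 0%N (map val (zidx xi)) a.-1.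
Definition ival n (xi : 'I_n -> int) (a : nat) : int := nth 0 (map xi (nzidx xi)) a.-1.

Definition xivec n (xi : 'I_n -> int) (sbar p : nat) : 'I_n -> int :=
  let k := nzcount xi in
  fun i =>
  if p == 1%N then xi i
  else if (p <= k - sbar + 1)%N then
    (if val i == iidx xi (sbar - 1 + p) then - xi i else xi i)
  else if (p <= k)%N then
    (if val i == iidx xi (sbar - 1 + p - k) then - xi i else xi i)
  else
    (if val i == iidx xi sbar then 0
     else if val i == jidx xi (p - k) then ival xi sbar
     else xi i).

Definition lin_indep m n (v : 'I_m -> 'I_n -> int) : Prop :=
  forall c : 'I_m -> int,
    (forall i : 'I_n, \sum_(p < m) c p * v p i = 0) -> forall p, c p = 0.

(* Write k for the number of non-zero coordinates of xi and c for the
   coefficients of a vanishing combination of xi_1, ..., xi_n.  At the zero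
   coordinate j_m only xi_{k+m} is non-zero, so the last n - k coefficients
   vanish.  At i_sbar every remaining xi_p agrees with xi, so the c_p sum to 0.
   For 1 < p <= k, xi_p differs from xi only by the sign at i_q, where q runs
   cyclically through the positions other than sbar; reading the combination
   at i_q gives -2 c_p xi^{i_q} = 0.  Finally c_1 = 0 because the sum is 0. *)
From mathcomp Require Import all_boot all_order all_algebra.
From mathcomp Require Import zify.
Set Implicit Arguments.
Unset Strict Implicit.
Unset Printing Implicit Defensive.
Import GRing.Theory Num.Theory.
Local Open Scope ring_scope.

Section VanishingCombination.
Variables (R : idomainType) (m n : nat) (v : 'I_m -> 'I_n -> R) (c : 'I_m -> R).
Hypothesis comb0 : forall i, \sum_(p < m) c p * v p i = 0.

Lemma coef_eq0_at_pivot (i : 'I_n) (p0 : 'I_m) :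
  (forall p, p != p0 -> v p i = 0) -> v p0 i != 0 -> c p0 = 0.
Proof.
move=> v_off v_p0; have := comb0 i.
rewrite (bigD1 p0) //= big1 ?addr0 => [/eqP|p /v_off ->]; last exact: mulr0.
by rewrite mulf_eq0 (negbTE v_p0) orbF => /eqP.
Qed.

Lemma sum_coef_eq0_at_const (i : 'I_n) (a : R) :
  (forall p, c p != 0 -> v p i = a) -> a != 0 -> \sum_(p < m) c p = 0.
Proof.
move=> v_a a_neq0; have := comb0 i.
rewrite (eq_bigr (fun p => c p * a)) => [|p _]; last first.
  by have [->|/v_a ->] := eqVneq (c p) 0; rewrite ?mul0r.
by rewrite -mulr_suml => /eqP; rewrite mulf_eq0 (negbTE a_neq0) orbF => /eqP.
Qed.

End VanishingCombination.

Lemma coef_eq0_at_flip (R : numDomainType) m n (v : 'I_m -> 'I_n -> R)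
    (c : 'I_m -> R) (i : 'I_n) (p0 : 'I_m) (a : R) :
  (forall i, \sum_(p < m) c p * v p i = 0) -> \sum_(p < m) c p = 0 ->
  (forall p, p != p0 -> c p != 0 -> v p i = a) -> v p0 i = - a -> a != 0 ->
  c p0 = 0.
Proof.
move=> comb0 sum0 v_a v_p0 a_neq0; have := comb0 i.
rewrite (bigD1 p0) //= v_p0 (eq_bigr (fun p => c p * a)) => [|p p_neq]; last first.
  by have [->|/(v_a _ p_neq) ->] := eqVneq (c p) 0; rewrite ?mul0r.
have -> : \sum_(p < m | p != p0) c p * a = - c p0 * a.
  move: sum0; rewrite (bigD1 p0) //= => /eqP; rewrite addr_eq0 => /eqP rest.
  by rewrite -mulr_suml rest opprK.
rewrite mulrN mulNr -opprD -mulrDl => /eqP; rewrite oppr_eq0 mulf_eq0 (negbTE a_neq0).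
by rewrite orbF -mulr2n mulrn_eq0 => /eqP.
Qed.

Definition cyclic_shift (k s p : nat) : nat :=
  if (s + p <= k)%N then (s + p)%N else (s + p - k)%N.

Lemma cyclic_shift_gt0 k s p : (0 < s)%N -> (p < k)%N -> (0 < cyclic_shift k s p)%N.
Proof. by rewrite /cyclic_shift; case: ifP; lia. Qed.

Lemma cyclic_shift_le k s p : (s <= k)%N -> (p < k)%N -> (cyclic_shift k s p <= k)%N.
Proof. by rewrite /cyclic_shift; case: ifP; lia. Qed.

Lemma cyclic_shift_neq k s p : (0 < p < k)%N -> cyclic_shift k s p != s.
Proof. by rewrite /cyclic_shift; case: ifP; lia. Qed.

Lemma cyclic_shift_inj k s p q : (p < k)%N -> (q < k)%N ->
  (cyclic_shift k s p == cyclic_shift k s q) = (p == q).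
Proof. by rewrite /cyclic_shift; do 2 case: ifP; lia. Qed.

Section Positions.
Variables (n : nat) (xi : 'I_n -> int) (i0 : 'I_n).
Local Notation k := (nzcount xi).

Definition nzpos (a : nat) : 'I_n := nth i0 (nzidx xi) a.-1.
Definition zpos (a : nat) : 'I_n := nth i0 (zidx xi) a.-1.

Lemma nzcount_add_size_zidx : (k + size (zidx xi))%N = n.
Proof.
rewrite /nzcount /nzidx /zidx !size_filter -[in RHS](size_enum_ord n).
rewrite -(count_predC (fun i : 'I_n => xi i != 0)).
by congr (_ + _)%N; apply: eq_count => i /=; rewrite negbK.
Qed.

Lemma nzidx_uniq : uniq (nzidx xi). Proof. by rewrite filter_uniq ?enum_uniq. Qed.
Lemma zidx_uniq : uniq (zidx xi). Proof. by rewrite filter_uniq ?enum_uniq. Qed.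

Section NonZero.
Variable a : nat.
Hypotheses (a_gt0 : (0 < a)%N) (a_le_k : (a <= k)%N).

Lemma iidx_nzpos : iidx xi a = nzpos a.
Proof. by rewrite /iidx /nzpos (nth_map i0) // prednK. Qed.

Lemma ival_nzpos : ival xi a = xi (nzpos a).
Proof. by rewrite /ival /nzpos (nth_map i0) // prednK. Qed.

Lemma xi_nzpos_neq0 : xi (nzpos a) != 0.
Proof.
have : nzpos a \in nzidx xi by apply: mem_nth; rewrite prednK.
by rewrite mem_filter => /andP[].
Qed.

Lemma nzpos_eqE b : (0 < b)%N -> (b <= k)%N -> (val (nzpos b) == iidx xi a) = (b == a).
Proof.
move=> b_gt0 b_le_k; rewrite iidx_nzpos (inj_eq val_inj) /nzpos.
rewrite nth_uniq ?prednK ?nzidx_uniq //; by apply/idP/idP => /eqP ?; apply/eqP; lia.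
Qed.

End NonZero.

Section Zero.
Variable a : nat.
Hypotheses (a_gt0 : (0 < a)%N) (a_le : (a <= size (zidx xi))%N).

Lemma jidx_zpos : jidx xi a = zpos a.
Proof. by rewrite /jidx /zpos (nth_map i0) // prednK. Qed.

Lemma xi_zpos : xi (zpos a) = 0.
Proof.
have : zpos a \in zidx xi by apply: mem_nth; rewrite prednK.
by rewrite mem_filter => /andP[/eqP].
Qed.

Lemma zpos_eqE b : (0 < b)%N -> (b <= size (zidx xi))%N ->
  (val (zpos b) == jidx xi a) = (b == a).
Proof.
move=> b_gt0 b_le; rewrite jidx_zpos (inj_eq val_inj) /zpos.
rewrite nth_uniq ?prednK ?zidx_uniq //; by apply/idP/idP => /eqP ?; apply/eqP; lia.
Qed.

Lemma zpos_neq_iidx b : (0 < b)%N -> (b <= k)%N -> (val (zpos a) == iidx xi b) = false.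
Proof.
move=> b_gt0 b_le_k; rewrite iidx_nzpos //; apply/negbTE/eqP => /val_inj eq_ab.
by have := xi_nzpos_neq0 b_gt0 b_le_k; rewrite -eq_ab xi_zpos eqxx.
Qed.

End Zero.

End Positions.

Section Xivec.
Variables (n : nat) (xi : 'I_n -> int) (sbar : nat) (i0 : 'I_n).
Local Notation k := (nzcount xi).
Hypotheses (sbar_gt0 : (0 < sbar)%N) (sbar_le_k : (sbar <= k)%N).
Local Notation nzpos := (nzpos xi i0).
Local Notation zpos := (zpos xi i0).
Local Notation shift := (cyclic_shift k sbar).

Lemma xivec_low (p : nat) (i : 'I_n) : (p < k)%N ->
  xivec xi sbar p.+1 i =
    if (0 < p)%N && (val i == iidx xi (shift p)) then - xi i else xi i.
Proof.
move=> p_lt_k; rewrite /xivec /cyclic_shift; case: (posnP p) => [->|p_gt0] //=.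
rewrite ifN; last lia.
have -> : (sbar - 1 + p.+1 = sbar + p)%N by lia.
have -> : (p < k - sbar + 1)%N = (sbar + p <= k)%N by apply/idP/idP; lia.
by rewrite p_lt_k; case: leqP.
Qed.

Lemma xivec_high (p : nat) (i : 'I_n) : (k <= p)%N ->
  xivec xi sbar p.+1 i =
    if val i == iidx xi sbar then 0
    else if val i == jidx xi (p.+1 - k) then ival xi sbar else xi i.
Proof.
by move=> k_le_p; rewrite /xivec; do 3 (case: ifP => ?; first lia).
Qed.

Lemma xivec_zpos (p : nat) (a : nat) : (p < n)%N -> (0 < a)%N -> (a <= n - k)%N ->
  xivec xi sbar p.+1 (zpos a) = if p.+1 == (k + a)%N then xi (nzpos sbar) else 0.
Proof.
have size_z := nzcount_add_size_zidx xi.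
move=> p_lt_n a_gt0 a_le; have [p_lt_k|k_le_p] := ltnP p k.
  by rewrite xivec_low // xi_zpos ?oppr0 ?if_same ?ifN //; lia.
rewrite xivec_high // zpos_neq_iidx ?zpos_eqE ?(ival_nzpos i0) ?xi_zpos //; try lia.
by have -> : (a == p.+1 - k)%N = (p.+1 == k + a)%N by apply/idP/idP => /eqP ?; apply/eqP; lia.
Qed.

Lemma xivec_nzpos_sbar (p : nat) :
  xivec xi sbar p.+1 (nzpos sbar) = if (p < k)%N then xi (nzpos sbar) else 0.
Proof.
have [p_lt_k|k_le_p] := ltnP p k; last by rewrite xivec_high // nzpos_eqE ?eqxx.
rewrite xivec_low // nzpos_eqE ?cyclic_shift_gt0 ?cyclic_shift_le //.
have [p_eq0|p_gt0] := posnP p; first by rewrite p_eq0.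
by rewrite eq_sym (negbTE (cyclic_shift_neq _ _)) // p_gt0 p_lt_k.
Qed.

Lemma xivec_nzpos_shift (p q : nat) : (0 < q < k)%N -> (p < k)%N ->
  xivec xi sbar p.+1 (nzpos (shift q)) =
    if p == q then - xi (nzpos (shift q)) else xi (nzpos (shift q)).
Proof.
move=> /andP[q_gt0 q_lt_k] p_lt_k.
rewrite xivec_low // nzpos_eqE ?cyclic_shift_gt0 ?cyclic_shift_le // cyclic_shift_inj //.
have [->|p_gt0] := posnP p; first by rewrite [0%N == q]eq_sym (gtn_eqF q_gt0).
by rewrite eq_sym.
Qed.

Section Combination.
Variable c : 'I_n -> int.
Hypothesis comb0 : forall i, \sum_(p < n) c p * xivec xi sbar p.+1 i = 0.

Lemma coef_high_eq0 (p : 'I_n) : (k <= p)%N -> c p = 0.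
Proof.
have size_z := nzcount_add_size_zidx xi; have p_lt_n := ltn_ord p.
move=> k_le_p; apply: (coef_eq0_at_pivot comb0 (i := zpos (p.+1 - k))).
  move=> p' /negPf p'_neq; rewrite xivec_zpos //; try lia.
  rewrite ifN //; apply: contraFN p'_neq => /eqP eq_p; apply/eqP/val_inj => /=; lia.
rewrite xivec_zpos; try lia.
by rewrite ifT ?xi_nzpos_neq0 //; apply/eqP; lia.
Qed.

Lemma sum_coef_eq0 : \sum_(p < n) c p = 0.
Proof.
have xi_sbar_neq0 := xi_nzpos_neq0 i0 sbar_gt0 sbar_le_k.
apply: (sum_coef_eq0_at_const comb0 (i := nzpos sbar)) xi_sbar_neq0 => p.
rewrite xivec_nzpos_sbar; have [//|k_le_p] := ltnP p k.
by rewrite coef_high_eq0 ?eqxx.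
Qed.

Lemma coef_mid_eq0 (p : 'I_n) : (0 < p < k)%N -> c p = 0.
Proof.
move=> /andP[p_gt0 p_lt_k].
have q_gt0 := cyclic_shift_gt0 sbar_gt0 p_lt_k.
have q_le_k := cyclic_shift_le sbar_le_k p_lt_k.
apply: (coef_eq0_at_flip comb0 sum_coef_eq0 (i := nzpos (shift p))).
- move=> p' p'_neq cp'_neq0; have [p'_lt_k|k_le_p'] := ltnP p' k.
    by rewrite xivec_nzpos_shift ?p_gt0 // ifN.
  by rewrite coef_high_eq0 ?eqxx in cp'_neq0.
- by rewrite xivec_nzpos_shift ?p_gt0 ?eqxx.
- exact: xi_nzpos_neq0.
Qed.

End Combination.

End Xivec.

Theorem lemma3p1 (n : nat) (xi : 'I_n -> int) (sbar : nat) :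
  (1 <= n)%N ->
  (exists i, xi i != 0) ->
  (1 <= sbar)%N -> (sbar <= nzcount xi)%N ->
  lin_indep (fun p : 'I_n => xivec xi sbar p.+1).
Proof.
move=> _ [i0 _] sbar_gt0 sbar_le_k c comb0.
have c_high := coef_high_eq0 i0 sbar_gt0 sbar_le_k comb0.
have c_mid := coef_mid_eq0 i0 sbar_gt0 sbar_le_k comb0.
move=> p; have [p_lt_k|/c_high //] := ltnP p (nzcount xi).
have [p_eq0|p_gt0] := posnP p; last by apply: c_mid; rewrite p_gt0.
have := sum_coef_eq0 i0 sbar_gt0 sbar_le_k comb0.
rewrite (bigD1 p) //= big1 ?addr0 // => p' p'_neq.
have p'_gt0 : (0 < p')%N.
  by rewrite lt0n; apply: contra p'_neq => /eqP p'_eq0; apply/eqP/val_inj; rewrite /= p'_eq0.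
have [p'_lt_k|/c_high //] := ltnP p' (nzcount xi).
by apply: c_mid; rewrite p'_gt0.
Qed.
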